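(* Let $n,m>3$ be integers and let $\psi$ be an automorphism of $\mathcal{CSR}(m,n)$, and suppose $\psi_1,\dots,\psi_m$ are permutations of $\mathbb{Z}_n$ and $\sigma$ is a permutation of $[m]$ such that $\psi\big(\sum_i x_ie_i\big)=\sum_i\psi_i(x_i)e_{\sigma(i)}$ for every vertex. Then there are $c,d\in\mathbb{Z}_n$ with $c$ coprime to $n$ such that $\psi_1(x)=cx+d$ for all $x\in\mathbb{Z}_n$.
   Context: For positive integers $m,n$, the cyclic simplicial rook graph $\mathcal{CSR}(m,n)$ is the graph whose vertices are the vectors $(a_1,\dots,a_m)\in\mathbb{Z}_n^m$ with $a_1+\cdots+a_m\equiv 0 \pmod n$, two vertices being adjacent if and only if their vectors differ in exactly two coordinates. $[m]=\{1,\dots,m\}$ and $e_i\in\mathbb{Z}_n^m$ is the vector with $1$ in coordinate $i$ and $0$ elsewhere. *)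

From HB Require Import structures.
From mathcomp Require Import all_boot all_order all_algebra all_fingroup.
Set Implicit Arguments. Unset Strict Implicit. Unset Printing Implicit Defensive.
Import GRing.Theory.
Local Open Scope ring_scope.

(* Vertices of CSR(m,n): vectors a in Z_n^m (functions 'I_m -> 'Z_n) with
   a_1 + ... + a_m = 0 in Z_n.  ('Z_n is Z/nZ when n >= 2.) *)
Definition csr_vertex (m n : nat) : predArgType :=
  {a : {ffun 'I_m -> 'Z_n} | \sum_(i < m) a i == 0}.

Definition csr_adj (m n : nat) (x y : csr_vertex m n) : bool :=
  #|[set i : 'I_m | val x i != val y i]| == 2%N.

Definition csr_automorphism (m n : nat) (psi : csr_vertex m n -> csr_vertex m n) : Prop :=
  bijective psi /\ forall x y, csr_adj (psi x) (psi y) = csr_adj x y.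

From HB Require Import structures.
From mathcomp Require Import all_boot all_order all_algebra all_fingroup.
Import GRing.Theory.
Local Open Scope ring_scope.

(* Feeding in vectors supported on three coordinates i, j, k shows that
   psi_i a + psi_j b + psi_k c is constant on the plane a + b + c = 0;
   comparing (a, b, -(a+b)) with (a+b, 0, -(a+b)) makes x |-> psi_i x - psi_i 0
   additive, hence multiplication by a constant c on Z_n.  As psi_i is onto,
   c is a unit. *)

Definition zero_sum_preserving {V : zmodType} {m : nat} (F : 'I_m -> V -> V) :=
  forall a : {ffun 'I_m -> V}, \sum_(i < m) a i = 0 -> \sum_(i < m) F i (a i) = 0.

Lemma csr_coordinate_maps_zero_sum {m n : nat}
    {psi : csr_vertex m n -> csr_vertex m n}
    {F : 'I_m -> 'Z_n -> 'Z_n} {sigma : {perm 'I_m}} :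
  (forall (x : csr_vertex m n) (i : 'I_m), val (psi x) (sigma i) = F i (val x i)) ->
  zero_sum_preserving F.
Proof.
move=> psiE a /eqP a_sum0.
have /eqP := valP (psi (exist _ a a_sum0)).
rewrite (reindex_inj (@perm_inj _ sigma)) /=.
by under eq_bigr => i _ do rewrite psiE.
Qed.

Lemma big_ord_split3 {V : nmodType} {m : nat} (G : 'I_m -> V) {i j k : 'I_m} :
  j != i -> k != i -> k != j ->
  \sum_(l < m) G l
    = G i + G j + G k + \sum_(l < m | [&& l != i, l != j & l != k]) G l.
Proof.
move=> ji ki kj.
rewrite (bigD1 i) //= (bigD1 j) //= (bigD1 k) /=; last by rewrite ki kj.
by rewrite !addrA; congr (_ + _); apply: eq_bigl => l; rewrite andbA.
Qed.

Lemma zero_sum_preserving_three {V : zmodType} {m : nat} {F : 'I_m -> V -> V}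
    {i j k : 'I_m} :
  zero_sum_preserving F -> j != i -> k != i -> k != j ->
  exists C, forall a b c, a + b + c = 0 -> F i a + F j b + F k c = C.
Proof.
move=> F0 ji ki kj.
exists (- \sum_(l < m | [&& l != i, l != j & l != k]) F l 0) => a b c abc0.
pose v := [ffun l => if l == i then a else if l == j then b
                     else if l == k then c else 0].
have v_rest l : [&& l != i, l != j & l != k] -> v l = 0.
  by case/and3P=> /negbTE li /negbTE lj /negbTE lk; rewrite ffunE li lj lk.
have vi : v i = a by rewrite ffunE eqxx.
have vj : v j = b by rewrite ffunE (negbTE ji) eqxx.
have vk : v k = c by rewrite ffunE (negbTE ki) (negbTE kj) eqxx.
have v_sum0 : \sum_(l < m) v l = 0.
  by rewrite (big_ord_split3 _ ji ki kj) big1 ?addr0 ?vi ?vj ?vk.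
have := F0 v v_sum0; rewrite (big_ord_split3 _ ji ki kj) vi vj vk.
rewrite (eq_bigr (fun l => F l 0)) => [|l /v_rest -> //].
by move/eqP; rewrite addr_eq0 => /eqP.
Qed.

Lemma affine_of_three_term {V : zmodType} {f g h : V -> V} {C : V} :
  (forall a b c, a + b + c = 0 -> f a + g b + h c = C) ->
  forall a b, f (a + b) = f a + f b - f 0.
Proof.
move=> fgh a b.
have shift x y : f x + g y = f (x + y) + g 0.
  apply: (addIr (h (- (x + y)))).
  by rewrite (fgh _ _ _ (subrr _)) fgh // addr0 subrr.
have g_b : g b = f b - f 0 + g 0.
  by apply: (addrI (f 0)); rewrite shift add0r addrCA addrA subrK.
by apply: (addIr (g 0)); rewrite -shift g_b !addrA.
Qed.

Lemma Zp_affine {p : nat} {f : 'Z_p -> 'Z_p} :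
  (forall a b, f (a + b) = f a + f b - f 0) ->
  forall x, f x = (f 1 - f 0) * x + f 0.
Proof.
move=> fD x.
pose g y := f y - f 0.
have gD y z : g (y + z) = g y + g z by rewrite /g fD addrACA addrA.
have gMn l : g (1 *+ l) = g 1 *+ l.
  elim: l => [|l IHl]; first by rewrite !mulr0n /g subrr.
  by rewrite !mulrS gD IHl.
apply: (addIr (- f 0)); rewrite addrK -/(g x) -/(g 1).
by rewrite -{1}(natr_Zp x) gMn -mulr_natr natr_Zp.
Qed.

Lemma affine_surj_unit {R : comUnitRingType} {f g : R -> R} {c d : R} :
  cancel g f -> (forall x, f x = c * x + d) -> c \is a GRing.unit.
Proof.
move=> gK fE; apply/unitrPr; exists (g (d + 1)).
by apply: (addIr d); rewrite -fE gK addrC.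
Qed.

Lemma Zp_unit_coprime {p : nat} {c : 'Z_p} :
  (1 < p)%N -> c \is a GRing.unit -> coprime c p.
Proof. by move=> p_gt1 c_unit; rewrite coprime_sym -unitZpE // natr_Zp. Qed.

Theorem lemma8 (m n : nat) (hm : (3 < m)%N) (hn : (3 < n)%N)
  (psi : csr_vertex m n -> csr_vertex m n) (Hpsi : csr_automorphism psi)
  (psis : 'I_m -> {perm 'Z_n}) (sigma : {perm 'I_m})
  (Hform : forall (x : csr_vertex m n) (i : 'I_m),
      val (psi x) (sigma i) = psis i (val x i))
  (i1 : 'I_m) (Hi1 : nat_of_ord i1 = 0%N) :
  exists c d : 'Z_n, coprime c n /\ forall x : 'Z_n, psis i1 x = c * x + d.
Proof.
have F0 := csr_coordinate_maps_zero_sum (F := fun i => psis i) Hform.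
pose j : 'I_m := Ordinal (ltn_trans (isT : 1 < 3)%N hm).
pose k : 'I_m := Ordinal (ltn_trans (isT : 2 < 3)%N hm).
have ji : j != i1 by rewrite -val_eqE /= Hi1.
have ki : k != i1 by rewrite -val_eqE /= Hi1.
have kj : k != j by rewrite -val_eqE.
have [C HC] := zero_sum_preserving_three F0 ji ki kj.
have psi1E := Zp_affine (affine_of_three_term HC).
exists (psis i1 1 - psis i1 0), (psis i1 0); split=> //.
apply: Zp_unit_coprime; first exact: ltn_trans hn.
exact: affine_surj_unit (permKV (psis i1)) psi1E.
Qed.
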